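(* Let $n,m,l$ be positive integers, $f:\mathbb{R}^n\times\mathbb{R}^m\to\mathbb{R}^n$ smooth with $f(0,0)=0$, $g_1,\dots,g_l:\mathbb{R}^n\times\mathbb{R}^m\to\mathbb{R}$ smooth with $g_i(0,0)=0$, and let $N_1,\dots,N_l\in\{1,\dots,n\}$ be pairwise distinct. Consider the system $$\dot x=f(x,u)+g_1(x,u)\theta_1e_{N_1}+\dots+g_l(x,u)\theta_le_{N_l},\qquad x\in\mathbb{R}^n,\ u\in\mathbb{R}^m,$$ with $e_1,\dots,e_n$ the standard basis of $\mathbb{R}^n$ and unknown constant $\theta=(\theta_1,\dots,\theta_l)'\in\mathbb{R}^l$, and let $k:\mathbb{R}^l\times\mathbb{R}^n\to\mathbb{R}^m$ be smooth with $k(\vartheta,0)=0$ for all $\vartheta$. Suppose that for every $\theta,\hat\theta_1,\dots,\hat\theta_l\in\mathbb{R}^l$ the sets $I_1,\dots,I_l$ produced by the algorithm in the context satisfy $I_1\cup\dots\cup I_l=\{1,\dots,l\}$. Then the following holds (with $N=l$ and $g(x,u)$ the $n\times l$ matrix whose $p$-th column is $g_p(x,u)e_{N_p}$): if there exist times $0=\tau_0<\tau_1<\dots<\tau_l$, vectors $\theta,d_0,\dots,d_l\in\mathbb{R}^l$ with $d_i\ne0$ for $i=0,\dots,l$, and a right differentiable $x\in C^0([0,\tau_l];\mathbb{R}^n)\cap C^1([0,\tau_l]\setminus\{\tau_0,\dots,\tau_l\};\mathbb{R}^n)$ satisfying $\dot x(t)=f(x(t),k(\theta+d_i,x(t)))+g(x(t),k(\theta+d_i,x(t)))\theta$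 for $t\in[\tau_i,\tau_{i+1})$, $i=0,\dots,l-1$, and $g(x(t),k(\theta+d_j,x(t)))d_{i+1}=0$ for all $t\in[\tau_j,\tau_{j+1}]$, $i=0,\dots,l-1$, $j=0,\dots,i$, then $x(t)=0$ for all $t\in[0,\tau_l]$.
   Context: Algorithm: given $\theta,\hat\theta_1,\dots,\hat\theta_l\in\mathbb{R}^l$, for $z\in\mathbb{R}^l$ define the vector field $F_z(x)=f(x,k(z,x))+\sum_{i=1}^lg_i(x,k(z,x))\theta_ie_{N_i}$. For a given $z$, say index $i\in\{1,\dots,l\}$ satisfies the implication ( * ) if: whenever $x\in\mathbb{R}^n$ satisfies $h_i(x)=0$ and $L_{F_z}^{(j)}h_i(x)=0$ for all $j=1,2,\dots$, where $h_i(x):=g_i(x,k(z,x))$, then $x=0$. Here $L_Fh=\nabla h\,F$ is the Lie derivative and $L_F^{(j)}h=L_FL_F^{(j-1)}h$, $L_F^{(1)}h=L_Fh$. Step 1: set $z=\hat\theta_1$ and let $I_1$ be the set of indices $i$ satisfying ( * ). Step $s>1$: set $z=\hat\theta_s$, then replace the component $z_i$ by $\theta_i$ for every $i\in I_1\cup\dots\cup I_{s-1}$; let $I_s$ be the set of indices $i$ satisfying ( * ) for this $z$. *)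

From HB Require Import structures.
From mathcomp Require Import all_boot all_order all_algebra.
From mathcomp Require Import all_classical all_reals all_analysis.
Set Implicit Arguments. Unset Strict Implicit. Unset Printing Implicit Defensive.
Import Order.TTheory GRing.Theory Num.Theory.
Import numFieldNormedType.Exports.
Local Open Scope classical_set_scope.
Local Open Scope ring_scope.

Section Defs.
Variable R : realType.

Fixpoint iter_dd (V W : normedModType R) (f : V -> W) (vs : seq V) : V -> W :=
  match vs with
  | [::] => f
  | v :: vs' => fun x => 'D_v (iter_dd f vs') x
  end.

(* smooth (C^oo): every iterated directional derivative exists and is
   (Frechet) differentiable everywhere; in finite dimension this is C^oo. *)
Definition smooth (V W : normedModType R) (f : V -> W) : Prop :=
  forall (vs : seq V) (x : V), differentiable (iter_dd f vs) x.

Definition lie (n : nat) (F : 'rV[R]_n -> 'rV[R]_n) (h : 'rV[R]_n -> R)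
  : 'rV[R]_n -> R := fun x => 'D_(F x) h x.

Definition lieN (n : nat) (F : 'rV[R]_n -> 'rV[R]_n) (j : nat)
  (h : 'rV[R]_n -> R) : 'rV[R]_n -> R := iter j (lie F) h.

Definition e_ (n : nat) (i : 'I_n) : 'rV[R]_n := delta_mx 0 i.

(* g(x,u) v  where g(x,u) is the n x l matrix whose p-th column is
   g_p(x,u) e_{N_p}; v is a vector of R^l (stored as a row). *)
Definition gmul (n m l : nat) (N : 'I_l -> 'I_n)
  (g : 'I_l -> 'rV[R]_n -> 'rV[R]_m -> R) (x : 'rV[R]_n) (u : 'rV[R]_m)
  (v : 'rV[R]_l) : 'rV[R]_n :=
  \sum_(p < l) (g p x u * v 0 p) *: e_ (N p).

Definition Fz (n m l : nat) (N : 'I_l -> 'I_n)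
  (f : 'rV[R]_n -> 'rV[R]_m -> 'rV[R]_n)
  (g : 'I_l -> 'rV[R]_n -> 'rV[R]_m -> R)
  (k : 'rV[R]_l -> 'rV[R]_n -> 'rV[R]_m) (theta z : 'rV[R]_l)
  : 'rV[R]_n -> 'rV[R]_n :=
  fun x => f x (k z x) + gmul N g x (k z x) theta.

Definition star (n m l : nat) (N : 'I_l -> 'I_n)
  (f : 'rV[R]_n -> 'rV[R]_m -> 'rV[R]_n)
  (g : 'I_l -> 'rV[R]_n -> 'rV[R]_m -> R)
  (k : 'rV[R]_l -> 'rV[R]_n -> 'rV[R]_m) (theta z : 'rV[R]_l) (i : 'I_l)
  : Prop :=
  let h := fun x => g i x (k z x) in
  forall x : 'rV[R]_n,
    h x = 0 ->
    (forall j : nat, (0 < j)%N -> lieN (Fz N f g k theta z) j h x = 0) ->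
    x = 0.

Definition zrepl (l : nat) (J : set 'I_l) (thh theta : 'rV[R]_l) : 'rV[R]_l :=
  \row_i (if `[< J i >] then theta 0 i else thh 0 i).

(* cumI s = I_1 ∪ ... ∪ I_s  produced by the algorithm, where the hat-theta
   of step s is thh s.-1 (i.e. thh 0 = hat theta_1, ...). *)
Fixpoint cumI (n m l : nat) (N : 'I_l -> 'I_n)
  (f : 'rV[R]_n -> 'rV[R]_m -> 'rV[R]_n)
  (g : 'I_l -> 'rV[R]_n -> 'rV[R]_m -> R)
  (k : 'rV[R]_l -> 'rV[R]_n -> 'rV[R]_m) (theta : 'rV[R]_l)
  (thh : nat -> 'rV[R]_l) (s : nat) : set 'I_l :=
  match s with
  | 0 => set0
  | s'.+1 =>
      let J := cumI N f g k theta thh s' in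
      J `|` [set i | star N f g k theta (zrepl J (thh s') theta) i]
  end.

Definition right_deriv (n : nat) (x : R -> 'rV[R]_n) (t : R) (v : 'rV[R]_n)
  : Prop :=
  (fun h : R => h^-1 *: (x (h + t) - x t)) @ 0^'+ --> v.

Definition right_derivable (n : nat) (x : R -> 'rV[R]_n) (t : R) : Prop :=
  exists v, right_deriv x t v.

End Defs.

From HB Require Import structures.
From mathcomp Require Import all_boot all_order all_algebra.
From mathcomp Require Import all_classical all_reals all_analysis.
From mathcomp Require Import lra zify.
Set Implicit Arguments. Unset Strict Implicit. Unset Printing Implicit Defensive.
Import Order.TTheory GRing.Theory Num.Theory.
Import numFieldNormedType.Exports.
Local Open Scope classical_set_scope.
Local Open Scope ring_scope.

(* On each piece [tau_j, tau_(j+1)] the trajectory solves x' = F_j(x), where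
   F_j is the closed-loop field for the estimate theta + d_j; F_j(0) = 0 and F_j
   is differentiable at 0, so |F_j(y)| <= L |y| near 0 and a Gronwall-type
   estimate makes the zero set of x open in the piece.  Being also closed, it is
   empty or the whole piece, and as consecutive pieces share an endpoint, x
   either vanishes on all of [0, tau_l] or nowhere.  In the latter case run the
   algorithm with hat-theta_(s+1) = theta + d_s.  By induction on s, each index p
   of I_1 u ... u I_s has (d_i)_p = 0 for s <= i <= l.  This makes z = theta + d_s
   at step s + 1; if p satisfies (star) there while (d_i)_p <> 0 for some i > s,
   the constraint g(x, k(theta + d_s, x)) d_i = 0 forces h_p(x(t)) = 0 on
   [tau_s, tau_(s+1)], hence all Lie derivatives of h_p along F_z vanish on the
   trajectory (they are differentiable because the data are smooth), and (star)
   gives a zero of x, a contradiction.  Since I_1 u ... u I_l = {1, ..., l}, this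
   yields d_l = 0, contradicting d_l <> 0. *)

Section SmoothUpto.
Variables (R : realType) (V : normedModType R).

Definition smooth_upto (W : normedModType R) (k : nat) (h : V -> W) : Prop :=
  forall vs : seq V, (size vs <= k)%N -> forall x, differentiable (iter_dd h vs) x.

Lemma iter_dd_rcons (W : normedModType R) (h : V -> W) vs v :
  iter_dd h (rcons vs v) = iter_dd ('D_v h) vs.
Proof. by elim: vs => [//|w vs IH] /=; rewrite IH. Qed.

Lemma smooth_upto0 (W : normedModType R) (h : V -> W) :
  smooth_upto 0 h <-> forall x, differentiable h x.
Proof. by split=> [H x|H [|//] _ x]; [exact: (H [::])|exact: H]. Qed.

Lemma smooth_uptoS (W : normedModType R) k (h : V -> W) :
  smooth_upto k.+1 h <->
  (forall x, differentiable h x) /\ forall v, smooth_upto k ('D_v h).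
Proof.
split=> [H|[dh Dh]].
  split=> [|v vs svs x]; first exact: (H [::]).
  by rewrite -iter_dd_rcons; apply: H; rewrite size_rcons.
case/lastP=> [|vs v] svs x; first exact: dh.
by rewrite iter_dd_rcons; apply: Dh; move: svs; rewrite size_rcons.
Qed.

Lemma smoothE (W : normedModType R) (h : V -> W) :
  smooth h <-> forall k, smooth_upto k h.
Proof. by split=> [H k vs _|H vs]; [exact: H|exact: (H (size vs))]. Qed.

Lemma smooth_differentiable (W : normedModType R) (h : V -> W) x :
  smooth h -> differentiable h x.
Proof. by move/(_ [::] x). Qed.

Lemma smooth_derive (W : normedModType R) (h : V -> W) v :
  smooth h -> smooth ('D_v h).
Proof. by move=> H vs x; rewrite -iter_dd_rcons. Qed.

Lemma eq_smooth_upto (W : normedModType R) k (f g : V -> W) :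
  f =1 g -> smooth_upto k f -> smooth_upto k g.
Proof. by move=> /funext ->. Qed.

Lemma eq_smooth (W : normedModType R) (f g : V -> W) :
  f =1 g -> smooth f -> smooth g.
Proof. by move=> /funext ->. Qed.

Lemma smooth_upto_cst (W : normedModType R) k (c : W) :
  smooth_upto k (fun _ => c).
Proof.
elim: k c => [|k IH] c; first by apply/smooth_upto0 => x; exact: differentiable_cst.
apply/smooth_uptoS; split=> [x|v]; first exact: differentiable_cst.
by apply: (eq_smooth_upto _ (IH 0)) => x; rewrite derive_cst.
Qed.

Lemma smooth_uptoD (W : normedModType R) k (f g : V -> W) :
  smooth_upto k f -> smooth_upto k g -> smooth_upto k (fun x => f x + g x).
Proof.
elim: k f g => [|k IH] f g.
  move=> /smooth_upto0 df /smooth_upto0 dg; apply/smooth_upto0 => x.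
  exact: differentiableD (df x) (dg x).
move=> /smooth_uptoS[df Df] /smooth_uptoS[dg Dg]; apply/smooth_uptoS; split.
  by move=> x; exact: differentiableD (df x) (dg x).
move=> v; apply: (eq_smooth_upto _ (IH _ _ (Df v) (Dg v))) => x /=.
by rewrite -deriveD //; exact: diff_derivable.
Qed.

Lemma smooth_upto_sum (W : normedModType R) k (I : finType) (F : I -> V -> W) :
  (forall i, smooth_upto k (F i)) -> smooth_upto k (fun x => \sum_i F i x).
Proof.
move=> SF; suff: forall s : seq I, smooth_upto k (fun x => \sum_(i <- s) F i x).
  by apply.
elim=> [|i s IH].
  by apply: (eq_smooth_upto _ (smooth_upto_cst (0 : W))) => x; rewrite big_nil.
by apply: (eq_smooth_upto _ (smooth_uptoD (SF i) IH)) => x; rewrite big_cons.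
Qed.

Lemma smooth_uptoM k (f g : V -> R) :
  smooth_upto k f -> smooth_upto k g -> smooth_upto k (fun x => f x * g x).
Proof.
elim: k f g => [|k IH] f g.
  move=> /smooth_upto0 df /smooth_upto0 dg; apply/smooth_upto0 => x.
  exact: differentiableM (df x) (dg x).
move=> Sf Sg.
have Sfk : smooth_upto k f by move=> vs svs; apply: Sf; exact: leqW.
have Sgk : smooth_upto k g by move=> vs svs; apply: Sg; exact: leqW.
move: Sf Sg => /smooth_uptoS[df Df] /smooth_uptoS[dg Dg]; apply/smooth_uptoS.
split=> [x|v]; first exact: differentiableM (df x) (dg x).
apply: (eq_smooth_upto _ (smooth_uptoD (IH _ _ Sfk (Dg v)) (IH _ _ Sgk (Df v)))) => x.
rewrite -[RHS]/('D_v (f * g) x).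
by rewrite (deriveM (diff_derivable (v := v) (df x)) (diff_derivable (v := v) (dg x))).
Qed.

Lemma smooth_cst (W : normedModType R) (c : W) : smooth (fun _ : V => c).
Proof. by apply/smoothE => k; exact: smooth_upto_cst. Qed.

Lemma smoothD (W : normedModType R) (f g : V -> W) :
  smooth f -> smooth g -> smooth (fun x => f x + g x).
Proof. by move=> /smoothE Sf /smoothE Sg; apply/smoothE => k; exact: smooth_uptoD. Qed.

Lemma smoothM (f g : V -> R) : smooth f -> smooth g -> smooth (fun x => f x * g x).
Proof. by move=> /smoothE Sf /smoothE Sg; apply/smoothE => k; exact: smooth_uptoM. Qed.

Lemma smooth_sum (W : normedModType R) (I : finType) (F : I -> V -> W) :
  (forall i, smooth (F i)) -> smooth (fun x => \sum_i F i x).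
Proof.
move=> SF; apply/smoothE => k; apply: smooth_upto_sum => i.
by move: (SF i) => /smoothE.
Qed.

End SmoothUpto.

Section SmoothComp.
Variables (R : realType) (V W : normedModType R).

(* The coordinates phi_i of Phi along fixed vectors b_i make
   D_v (G \o Phi) = sum_i D_v phi_i * (D_(b_i) G \o Phi) a combination of the same
   kind, so the induction on the order of differentiability goes through. *)
Lemma smooth_comp (I : finType) (G : W -> R) (Phi : V -> W)
    (phi : I -> V -> R) (b : I -> W) :
  (forall x, differentiable Phi x) ->
  (forall v x, 'D_v Phi x = \sum_i 'D_v (phi i) x *: b i) ->
  (forall i, smooth (phi i)) -> smooth G -> smooth (fun x => G (Phi x)).
Proof.
move=> dPhi DPhi Sphi SG; apply/smoothE => k.
elim: k G SG => [|k IH] G SG.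
  apply/smooth_upto0 => x.
  exact: differentiable_comp (dPhi x) (smooth_differentiable _ SG).
have dGPhi x : differentiable (G \o Phi) x.
  exact: differentiable_comp (dPhi x) (smooth_differentiable _ SG).
apply/smooth_uptoS; split=> [|v]; first exact: dGPhi.
apply: (eq_smooth_upto (f := fun x => \sum_i 'D_v (phi i) x * 'D_(b i) G (Phi x))).
  move=> x /=; rewrite -[(fun x => G (Phi x))]/(G \o Phi) (deriveE _ (dGPhi x)).
  rewrite diff_comp //; last exact: smooth_differentiable.
  rewrite /= -(deriveE _ (dPhi x)) DPhi linear_sum; apply: eq_bigr => i _.
  by rewrite linearZ /= -deriveE //; exact: smooth_differentiable.
apply: smooth_upto_sum => i; apply: smooth_uptoM.
  by move: (smooth_derive v (Sphi i)) => /smoothE.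
exact: IH (smooth_derive _ SG).
Qed.

Lemma smooth_coord (p q : nat) (M : V -> 'M[R]_(p, q)) i j :
  smooth M -> smooth (fun x => M x i j).
Proof.
move=> SM.
have E vs : iter_dd (fun x => M x i j) vs = fun x => iter_dd M vs x i j.
  elim: vs => [//|v vs IH] /=; rewrite IH; apply: funext => x.
  by rewrite (derive_mx (diff_derivable (SM vs x))) mxE.
move=> vs x; rewrite E.
exact: differentiable_comp (SM vs x) (differentiable_coord _ i j).
Qed.

End SmoothComp.

Lemma derive_row_coord (R : realType) n (i : 'I_n) (x v : 'rV[R]_n) :
  'D_v (fun y : 'rV[R]_n => y 0 i) x = v 0 i.
Proof. by rewrite -[in RHS](derive_id x v) (derive_mx (@derivable_id _ _ x v)) mxE. Qed.

Lemma smooth_row_coord (R : realType) n (i : 'I_n) :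
  smooth (fun x : 'rV[R]_n => x 0 i).
Proof.
apply/smoothE => -[|k]; first by apply/smooth_upto0 => x; exact: differentiable_coord.
apply/smooth_uptoS; split=> [x|v]; first exact: differentiable_coord.
by apply: (eq_smooth_upto _ (smooth_upto_cst (v 0 i))) => x; rewrite derive_row_coord.
Qed.

Lemma derive_pair (R : realType) (U V W : normedModType R) (f1 : U -> V)
    (f2 : U -> W) x v :
  differentiable f1 x -> differentiable f2 x ->
  'D_v (fun y => (f1 y, f2 y)) x = ('D_v f1 x, 'D_v f2 x).
Proof.
move=> d1 d2; rewrite deriveE; last exact: differentiable_pair.
by rewrite diff_pair // -!deriveE.
Qed.

Lemma smooth_comp_pair (R : realType) (U : normedModType R) n m
    (G : 'rV[R]_n * 'rV[R]_m -> R) (a : U -> 'rV[R]_n) (b : U -> 'rV[R]_m) :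
  (forall x, differentiable a x) -> (forall x, differentiable b x) ->
  (forall i, smooth (fun x => a x 0 i)) -> (forall j, smooth (fun x => b x 0 j)) ->
  smooth G -> smooth (fun x => G (a x, b x)).
Proof.
move=> da db Sa Sb SG.
pose phi (s : 'I_n + 'I_m) : U -> R :=
  match s with inl i => fun x => a x 0 i | inr j => fun x => b x 0 j end.
pose e (s : 'I_n + 'I_m) : 'rV[R]_n * 'rV[R]_m :=
  match s with inl i => (e_ R i, 0) | inr j => (0, e_ R j) end.
apply: (smooth_comp (phi := phi) (b := e)) => //.
- by move=> x; exact: differentiable_pair.
- move=> v x; rewrite derive_pair // (derive_mx (diff_derivable (v := v) (da x))).
  rewrite (derive_mx (diff_derivable (v := v) (db x))) big_sumType /phi /e /=.
  rewrite [RHS]surjective_pairing !(raddfD, raddf_sum) /=.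
  congr (_, _).
  + rewrite [X in _ = _ + X]big1 ?addr0; last by move=> j _; rewrite scaler0.
    by rewrite [LHS]row_sum_delta; apply: eq_bigr => i _; rewrite mxE.
  + rewrite [X in _ = X + _]big1 ?add0r; last by move=> i _; rewrite scaler0.
    by rewrite [LHS]row_sum_delta; apply: eq_bigr => j _; rewrite mxE.
- by case.
Qed.

Section ClosedLoop.
Variables (R : realType) (n m l : nat).
Variables (f : 'rV[R]_n -> 'rV[R]_m -> 'rV[R]_n)
  (g : 'I_l -> 'rV[R]_n -> 'rV[R]_m -> R) (N : 'I_l -> 'I_n)
  (k : 'rV[R]_l -> 'rV[R]_n -> 'rV[R]_m).
Hypotheses (Sf : smooth (fun q : 'rV[R]_n * 'rV[R]_m => f q.1 q.2))
  (Sg : forall p, smooth (fun q : 'rV[R]_n * 'rV[R]_m => g p q.1 q.2))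
  (Sk : smooth (fun q : 'rV[R]_l * 'rV[R]_n => k q.1 q.2)).

Lemma differentiable_k z x : differentiable (k z) x.
Proof.
have dz : differentiable (fun y : 'rV[R]_n => (z, y)) x.
  by apply: differentiable_pair; [exact: differentiable_cst|exact: ex_diff].
exact: differentiable_comp dz (smooth_differentiable _ Sk).
Qed.

Lemma smooth_k_coord z j : smooth (fun x => k z x 0 j).
Proof.
apply: (smooth_comp_pair (G := fun q => k q.1 q.2 0 j) (a := fun _ => z) (b := id)).
- by move=> x; exact: differentiable_cst.
- by move=> x; exact: ex_diff.
- by move=> i; exact: smooth_cst.
- exact: smooth_row_coord.
- exact: smooth_coord 0 j Sk.
Qed.

Lemma smooth_closed_loop z (G : 'rV[R]_n * 'rV[R]_m -> R) :
  smooth G -> smooth (fun x => G (x, k z x)).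
Proof.
apply: (smooth_comp_pair (a := id) (b := k z)).
- by move=> x; exact: ex_diff.
- exact: differentiable_k.
- exact: smooth_row_coord.
- exact: smooth_k_coord.
Qed.

Lemma smooth_gk z p : smooth (fun x => g p x (k z x)).
Proof. exact: smooth_closed_loop (Sg p). Qed.

Lemma smooth_Fz_coord th z i : smooth (fun x => Fz N f g k th z x 0 i).
Proof.
apply: (eq_smooth (f := fun x => f x (k z x) 0 i +
   \sum_p (g p x (k z x) * th 0 p) * e_ R (N p) 0 i)).
  move=> x; rewrite /Fz /gmul !mxE summxE; congr (_ + _).
  by apply: eq_bigr => p _; rewrite [RHS]mxE.
apply: smoothD; first exact: smooth_closed_loop (smooth_coord 0 i Sf).
apply: smooth_sum => p; apply: smoothM; last exact: smooth_cst.
by apply: smoothM; [exact: smooth_gk|exact: smooth_cst].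
Qed.

Lemma smooth_lie th z h : smooth h -> smooth (lie (Fz N f g k th z) h).
Proof.
move=> Sh.
apply: (eq_smooth (f := fun x => \sum_(i < n) Fz N f g k th z x 0 i * 'D_(e_ R i) h x)).
  move=> x; rewrite /lie (deriveE _ (smooth_differentiable x Sh)).
  rewrite [X in _ = 'd h x X]row_sum_delta linear_sum; apply: eq_bigr => i _.
  by rewrite linearZ /= -deriveE //; exact: smooth_differentiable.
by apply: smooth_sum => i; apply: smoothM; [exact: smooth_Fz_coord|exact: smooth_derive].
Qed.

Lemma smooth_lieN th z h j : smooth h -> smooth (lieN (Fz N f g k th z) j h).
Proof. by move=> Sh; elim: j => [//|j IH]; rewrite /lieN iterS; exact: smooth_lie. Qed.

Lemma differentiable_Fz th z x : differentiable (Fz N f g k th z) x.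
Proof.
have -> : Fz N f g k th z = \sum_(i < n) (fun y => Fz N f g k th z y 0 i *: e_ R i).
  by rewrite fct_sumE; apply: funext => y; exact: row_sum_delta.
apply: differentiable_sum => i; apply: differentiableZl.
exact: smooth_differentiable (smooth_Fz_coord th z i).
Qed.

End ClosedLoop.

Lemma gmul_coord (R : realType) n m l (N : 'I_l -> 'I_n)
    (g : 'I_l -> 'rV[R]_n -> 'rV[R]_m -> R) y u v p :
  injective N -> gmul N g y u v 0 (N p) = g p y u * v 0 p.
Proof.
move=> Ninj; rewrite /gmul summxE (bigD1 p) //= big1 ?addr0.
  by rewrite !mxE !eqxx mulr1.
move=> q qp; rewrite !mxE eqxx /=.
by rewrite (inj_eq Ninj) eq_sym (negbTE qp) mulr0.
Qed.

Lemma Fz_at0 (R : realType) n m l (N : 'I_l -> 'I_n) f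
    (g : 'I_l -> 'rV[R]_n -> 'rV[R]_m -> R) k th z :
  f 0 0 = 0 -> (forall i, g i 0 0 = 0) -> (forall vt, k vt 0 = 0) ->
  Fz N f g k th z 0 = 0.
Proof.
move=> f0 g0 k0; rewrite /Fz /gmul k0 f0 add0r.
by rewrite big1 // => p _; rewrite g0 mul0r scale0r.
Qed.

Lemma linear_bound_near0 (R : realType) n (F : 'rV[R]_n -> 'rV[R]_n) :
  differentiable F 0 -> F 0 = 0 ->
  exists2 r : R, 0 < r & exists2 L : R, 0 < L &
    forall y, `|y| < r -> `|F y| <= L * `|y|.
Proof.
move=> dF F0.
have [k k0 Hk] := linear_lipschitz (diff_continuous dF).
have /eqaddoP /(_ 1 ltr01) /nbhs_ballP [r /= r0 Hr] := diff_locally dF.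
exists r => //; exists (k + 1); first by rewrite addr_gt0.
move=> y yr.
have yb : ball (0 : 'rV[R]_n) r y by rewrite -ball_normE /ball_ /= sub0r normrN.
have := Hr y yb.
rewrite -[(_ - _) y]/(F (y + 0) - (F 0 + 'd F 0 y)) F0 addr0 add0r mul1r => h.
rewrite mulrDl mul1r.
have -> : F y = (F y - 'd F 0 y) + 'd F 0 y by rewrite subrK.
by apply: le_trans (ler_normD _ _) _; rewrite addrC lerD.
Qed.

Lemma derive_right_deriv (R : realType) n (x : R -> 'rV[R]_n) t w :
  derivable x t 1 -> right_deriv x t w -> 'D_1 x t = w.
Proof.
move=> dx rd.
have E : (fun h : R => h^-1 *: ((x \o shift t) (h *: 1) - x t)) =
         (fun h : R => h^-1 *: (x (h + t) - x t)).
  by apply: funext => h /=; rewrite [h *: 1]mulr1.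
move: dx; rewrite /derive /derivable E => dx.
by rewrite (cvg_at_rightE _ _ dx); exact: cvg_lim rd.
Qed.

Lemma lie_comp_eq0 (R : realType) n (x : R -> 'rV[R]_n) (F : 'rV[R]_n -> 'rV[R]_n)
    (H : 'rV[R]_n -> R) a b :
  (forall y, differentiable H y) ->
  (forall s, a < s < b -> derivable x s 1 /\ 'D_1 x s = F (x s)) ->
  (forall s, a < s < b -> H (x s) = 0) ->
  forall s, a < s < b -> lie F H (x s) = 0.
Proof.
(* By the chain rule, lie F H (x s) is the derivative at s of H \o x, which
   vanishes near s. *)
move=> dH dx Hx s sab.
have [dxs Dxs] := dx s sab.
have dxs' : differentiable x s by apply/derivable1_diffP.
rewrite /lie deriveE // -Dxs deriveE // -[X in _ = X](derive_cst (0 : R) s 1).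
rewrite -[LHS]/(('d H (x s) \o 'd x s) 1).
rewrite -diff_comp // -deriveE; last exact: differentiable_comp.
have sab' : s \in `]a, b[ by rewrite in_itv.
apply: near_eq_derive; near=> u.
rewrite /= Hx //.
by near: u; apply: filterS (near_in_itvoo sab') => u; rewrite in_itv.
Unshelve. all: by end_near.
Qed.

Lemma lieN_comp_eq0 (R : realType) n (x : R -> 'rV[R]_n) (F : 'rV[R]_n -> 'rV[R]_n)
    (H : 'rV[R]_n -> R) a b :
  (forall j y, differentiable (lieN F j H) y) ->
  (forall s, a < s < b -> derivable x s 1 /\ 'D_1 x s = F (x s)) ->
  (forall s, a < s < b -> H (x s) = 0) ->
  forall j s, a < s < b -> lieN F j H (x s) = 0.
Proof.
move=> dL dx Hx; elim=> [//|j IH] s sab.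
by rewrite /lieN iterS; exact: lie_comp_eq0 (dL j) dx IH s sab.
Qed.

Lemma segment_clopen_propagate (R : realType) (P : R -> Prop) (a b : R) :
  {in `[a, b], forall s, P s -> \forall t \near s, t \in `[a, b] -> P t} ->
  {in `[a, b], forall s, ~ P s -> \forall t \near s, t \in `[a, b] -> ~ P t} ->
  {in `[a, b] &, forall s t, P s -> P t}.
Proof.
move=> nearP nearNP s t sI tI Ps.
have connI : connected `[a, b]%classic := @segment_connected R a b.
suff : `[a, b]%classic `&` P = `[a, b]%classic by move=> /seteqP[_ /(_ t tI)] [].
apply: connI.
- by exists s.
- exists (interior [set u | u \in `[a, b] -> P u]); first exact: open_interior.
  apply/seteqP; split=> [u [uI Pu]|u [uI /nbhs_singleton /(_ uI) Pu]] //.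
  by split=> //; exact: nearP.
- exists (~` interior [set u | u \in `[a, b] -> ~ P u]).
    exact/open_closedC/open_interior.
  apply/seteqP; split=> [u [uI Pu]|u [uI NPu]].
    by split=> // /nbhs_singleton /(_ uI).
  by split=> //; apply: contrapT => nPu; exact/NPu/nearNP.
Qed.

Lemma continuous_subsegment (R : realFieldType) (T : topologicalType) (x : R -> T)
    a b c d :
  {within `[a, b], continuous x} -> a <= c -> d <= b ->
  {within `[c, d], continuous x}.
Proof.
move=> cx ac db; apply: continuous_subspaceW cx => t.
rewrite /= !in_itv /= => /andP[ct td].
by rewrite (le_trans ac ct) (le_trans td db).
Qed.

Lemma segment_continuous_near (R : realFieldType) (V : normedModType R) (x : R -> V)
    a b s e :
  {within `[a, b], continuous x} -> s \in `[a, b] -> 0 < e ->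
  \forall t \near s, t \in `[a, b] -> `|x t - x s| < e.
Proof.
move=> /subspace_continuousP cx sI e0.
have /cvgrPdist_lt /(_ e e0) := cx s sI.
by rewrite near_withinE; apply: filterS => t H tI; rewrite distrC; exact: H.
Qed.

Lemma norm_rV_le (R : realFieldType) n (A : 'rV[R]_n) (c : R) :
  0 <= c -> (forall i, `|A 0 i| <= c) -> `|A| <= c.
Proof.
move=> c0 H; rewrite [leLHS]/Num.Def.normr /= mx_normrE.
by apply: bigmax_le => // -[i j] _ /=; rewrite (ord1 i).
Qed.

Lemma norm_rV_coord_le (R : realFieldType) n (A : 'rV[R]_n) i : `|A 0 i| <= `|A|.
Proof.
rewrite [leRHS]/Num.Def.normr /= mx_normrE.
by rewrite (bigD1 (0, i)) //= le_max lexx.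
Qed.

Section OdeUniqueness.
Variables (R : realType) (n : nat) (x : R -> 'rV[R]_n) (F : 'rV[R]_n -> 'rV[R]_n).
Variables a b : R.
Hypothesis x_cont : {within `[a, b], continuous x}.
Hypothesis x_ode : forall u, a < u < b -> derivable x u 1 /\ 'D_1 x u = F (x u).

Lemma ode_coord_mvt u w i : a <= u -> u < w -> w <= b ->
  exists2 xi, u < xi < w & x w 0 i - x u 0 i = F (x xi) 0 i * (w - u).
Proof.
move=> au uw wb.
have [t|t|xi] := @MVT R (fun t => x t 0 i) (fun t => 'D_1 x t 0 i) u w uw.
- rewrite in_itv /= => /andP[ut tw].
  have [dxt _] := x_ode (introT andP (conj (le_lt_trans au ut) (lt_le_trans tw wb))).
  apply: DeriveDef; first by move/derivable_mxP: dxt; apply.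
  by rewrite (derive_mx dxt) mxE.
- apply: (@continuous_comp _ _ _ (from_subspace `[u, w] x) (fun M : 'rV[R]_n => M 0 i)).
    by have := continuous_subsegment x_cont au wb; apply.
  exact: coord_continuous.
- rewrite in_itv /= => /andP[uxi xiw] ->; exists xi; first by rewrite uxi xiw.
  by have [_ ->] := x_ode (introT andP (conj (le_lt_trans au uxi) (lt_le_trans xiw wb))).
Qed.

Lemma ode_lipschitz c d K : a <= c -> d <= b ->
  (forall xi, c <= xi <= d -> `|F (x xi)| <= K) ->
  forall s t, c <= s <= d -> c <= t <= d -> `|x t - x s| <= K * `|t - s|.
Proof.
move=> ac db FK s t sI tI.
have K0 : 0 <= K by apply: le_trans (FK s sI); exact: normr_ge0.
wlog st : s t sI tI / s <= t.
  move=> H; have [|ts] := leP s t; first exact: H.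
  by rewrite distrC [`|t - s|]distrC; apply: H => //; exact: ltW.
move: st; rewrite le_eqVlt => /orP[/eqP<-|st]; first by rewrite !subrr !normr0 mulr0.
case/andP: sI => cs sd; case/andP: tI => ct td.
rewrite ger0_norm ?subr_ge0 ?(ltW st) //.
apply: norm_rV_le => [|i]; first by rewrite mulr_ge0 // subr_ge0 ltW.
rewrite !mxE.
have [xi /andP[sxi xit] ->] := ode_coord_mvt i (le_trans ac cs) st (le_trans td db).
rewrite normrM [`|t - s|]ger0_norm ?subr_ge0 ?(ltW st) // ler_pM2r ?subr_gt0 //.
apply: le_trans (norm_rV_coord_le _ _) (FK _ _).
by rewrite (le_trans cs (ltW sxi)) (le_trans (ltW xit) td).
Qed.

Lemma ode_zero_segment c d L s : a <= c -> d <= b -> c <= s <= d -> x s = 0 ->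
  0 <= L -> L * (d - c) < 1 ->
  (forall t, c <= t <= d -> `|F (x t)| <= L * `|x t|) ->
  forall t, c <= t <= d -> x t = 0.
Proof.
(* With M the maximum of |x| on [c, d], the mean value theorem gives
   M <= L M (d - c), hence M = 0. *)
move=> ac db sI xs0 L0 Lcd FL.
have cd : c <= d by case/andP: sI; exact: le_trans.
have cxI : {within `[c, d], continuous (fun t => `|x t|)}.
  move=> t; apply: (@continuous_comp _ _ _ (from_subspace `[c, d] x) (@Num.norm _ _)).
    by have := continuous_subsegment x_cont ac db; apply.
  exact: norm_continuous.
have [tM tMI xM] := EVT_max cd cxI.
set M := `|x tM|.
have xM' t : c <= t <= d -> `|x t| <= M by move=> tI; apply: xM; rewrite in_itv.
have M0 : 0 <= M by exact: normr_ge0.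
have xt_le t : c <= t <= d -> `|x t| <= L * M * (d - c).
  move=> tI; have -> : x t = x t - x s by rewrite xs0 subr0.
  apply: le_trans (ode_lipschitz (K := L * M) ac db _ sI tI) _ => [xi xiI|].
    exact: le_trans (FL xi xiI) (ler_wpM2l L0 (xM' _ xiI)).
  rewrite -subr_ge0 -mulrBr mulr_ge0 ?mulr_ge0 // subr_ge0 ler_norml.
  by case/andP: sI => cs sd; case/andP: tI => ct td; apply/andP; split; lra.
have MM : M <= L * M * (d - c) by apply: xt_le; rewrite in_itv in tMI.
have {}M0 : M = 0 by nra.
by move=> t tI; apply/eqP; rewrite -normr_le0 -M0; exact: xM'.
Qed.

Hypothesis F_bound : exists2 r : R, 0 < r & exists2 L : R, 0 < L &
  forall y, `|y| < r -> `|F y| <= L * `|y|.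

Lemma ode_zero_near s : s \in `[a, b] -> x s = 0 ->
  \forall t \near s, t \in `[a, b] -> x t = 0.
Proof.
move=> sI xs0; case: F_bound => r r0 [L L0 FL].
have /nbhs_ballP[δ /= δ0 xr] := segment_continuous_near x_cont sI r0.
pose e := Num.min (δ / 2) (4 * L)^-1.
have [e0 eδ eL] : [/\ 0 < e, e <= δ / 2 & e <= (4 * L)^-1].
  by rewrite lt_min !ge_min !lexx orbT divr_gt0 ?invr_gt0 ?mulr_gt0.
have Le : L * (2 * e) < 1.
  have : L * (4 * L)^-1 = 4^-1 by rewrite invfM mulrCA mulfV ?gt_eqF // mulr1.
  have : L * e <= L * (4 * L)^-1 by rewrite ler_pM2l.
  lra.
move: sI; rewrite in_itv /= => /andP[sa sb].
pose c := Num.max a (s - e); pose d := Num.min b (s + e).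
have [ac sec cs] : [/\ a <= c, s - e <= c & c <= s].
  by rewrite !le_max !ge_max !lexx orbT sa /=; split=> //; lra.
have [db dse sd] : [/\ d <= b, d <= s + e & s <= d].
  by rewrite !ge_min !le_min !lexx orbT sb /=; split=> //; lra.
have x0 : forall t, c <= t <= d -> x t = 0.
  apply: (ode_zero_segment (L := L) (s := s) ac db) => //.
  - by rewrite cs sd.
  - exact: ltW.
  - by apply: le_lt_trans Le; rewrite ler_pM2l //; lra.
  move=> t /andP[ct td]; apply: FL; rewrite -[x t]subr0 -xs0.
  apply: xr; first by rewrite /ball /= distrC ltr_norml; apply/andP; split; lra.
  by rewrite in_itv /= (le_trans ac ct) (le_trans td db).
apply/nbhs_ballP; exists e => // t; rewrite /ball /= ltr_norml in_itv /=.
move=> /andP[h1 h2] /andP[ta tb]; apply: x0.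
by rewrite ge_max le_min ta tb /=; apply/andP; split; lra.
Qed.

Lemma ode_zero_propagate s : s \in `[a, b] -> x s = 0 ->
  forall t, t \in `[a, b] -> x t = 0.
Proof.
move=> sI xs0 t tI.
apply: (segment_clopen_propagate (P := fun t => x t = 0) _ _ sI tI xs0).
  exact: ode_zero_near.
move=> u uI xu0; have e0 : 0 < `|x u| by rewrite normr_gt0; exact/eqP.
apply: filterS (segment_continuous_near x_cont uI e0) => v H vI xv0.
by move: (H vI); rewrite xv0 sub0r normrN ltxx.
Qed.

End OdeUniqueness.

Section Breakpoints.
Variables (R : realType) (l : nat) (tau : nat -> R).
Hypothesis tau_incr : forall j, (j < l)%N -> tau j < tau j.+1.

Lemma tau_le i j : (i <= j)%N -> (j <= l)%N -> tau i <= tau j.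
Proof.
elim: j => [|j IH]; first by rewrite leqn0 => /eqP ->.
rewrite leq_eqVlt => /orP[/eqP -> //|ij] jl.
exact: le_trans (IH ij (ltnW jl)) (ltW (tau_incr jl)).
Qed.

Lemma tau_neq j t : (j < l)%N -> tau j < t < tau j.+1 ->
  forall i, (i <= l)%N -> t != tau i.
Proof.
move=> jl /andP[jt tj] i il; apply/eqP => ti.
have [ij|ji] := leqP i j.
  by have := tau_le ij (ltnW jl); rewrite -ti leNgt jt.
by have := tau_le ji il; rewrite -ti leNgt tj.
Qed.

Lemma tau_cover t : (0 < l)%N -> tau 0 <= t <= tau l ->
  exists2 j, (j < l)%N & tau j <= t <= tau j.+1.
Proof.
move=> l0 tI; suff cover : forall i, (i < l)%N -> tau 0 <= t <= tau i.+1 ->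
    exists2 j, (j < l)%N & tau j <= t <= tau j.+1.
  by apply: (cover l.-1); rewrite ?prednK ?ltn_predL.
elim=> [|i IH] il /andP[t0 ti]; first by exists 0%N; rewrite ?t0.
have [tsi|sit] := leP t (tau i.+1); last by exists i.+1; rewrite ?(ltW sit).
by apply: IH; [exact: ltnW|rewrite t0 /=].
Qed.

End Breakpoints.

Section PiecewiseOde.
Variables (R : realType) (n l : nat) (tau : nat -> R) (x : R -> 'rV[R]_n).
Variable F : nat -> 'rV[R]_n -> 'rV[R]_n.
Hypothesis tau_incr : forall j, (j < l)%N -> tau j < tau j.+1.
Hypothesis x_cont : {within `[tau 0, tau l], continuous x}.
Hypothesis x_ode : forall j, (j < l)%N -> forall u, tau j < u < tau j.+1 ->
  derivable x u 1 /\ 'D_1 x u = F j (x u).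
Hypothesis F_bound : forall j, (j < l)%N ->
  exists2 r : R, 0 < r & exists2 L : R, 0 < L &
    forall y, `|y| < r -> `|F j y| <= L * `|y|.

Lemma piece_zero j s : (j < l)%N -> tau j <= s <= tau j.+1 -> x s = 0 ->
  forall t, tau j <= t <= tau j.+1 -> x t = 0.
Proof.
move=> jl sI xs0 t tI.
have cx : {within `[tau j, tau j.+1], continuous x}.
  by apply: continuous_subsegment x_cont _ _; apply: (tau_le tau_incr) => //; exact: ltnW.
by apply: (ode_zero_propagate cx (x_ode jl) (F_bound jl) _ xs0); rewrite in_itv.
Qed.

Lemma piecewise_zero j s : (j < l)%N -> tau j <= s <= tau j.+1 -> x s = 0 ->
  forall t, tau 0 <= t <= tau l -> x t = 0.
Proof.
pose Z i := forall t, tau i <= t <= tau i.+1 -> x t = 0.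
have step i : (i.+1 < l)%N -> Z i <-> Z i.+1.
  have tauI i' : (i' < l)%N -> tau i' <= tau i'.+1 <= tau i'.+1.
    by move=> il; rewrite lexx ltW ?tau_incr.
  have tauI' i' : (i' < l)%N -> tau i' <= tau i' <= tau i'.+1.
    by move=> il; rewrite lexx ltW ?tau_incr.
  move=> il; split=> Zi.
    exact: piece_zero il (tauI' _ il) (Zi _ (tauI _ (ltnW il))).
  exact: piece_zero (ltnW il) (tauI _ (ltnW il)) (Zi _ (tauI' _ il)).
have Z0 i : (i < l)%N -> Z i <-> Z 0.
  elim: i => [//|i IH] il.
  have [Si Si'] := step i il; have [Ii Ii'] := IH (ltnW il).
  by split=> Zi; [exact: Ii (Si' Zi)|exact: Si (Ii' Zi)].
move=> jl sI xs0 t tI.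
have [i il tI'] := tau_cover (leq_ltn_trans (leq0n j) jl) tI.
exact: (Z0 i il).2 ((Z0 j jl).1 (piece_zero jl sI xs0)) t tI'.
Qed.

End PiecewiseOde.

Lemma zrepl_id (R : realType) l (J : set 'I_l) (thh theta : 'rV[R]_l) :
  (forall i, J i -> thh 0 i = theta 0 i) -> zrepl J thh theta = thh.
Proof. by move=> E; apply/rowP => i; rewrite mxE; case: asboolP => [/E ->|]. Qed.

Section Algorithm.
Variables (R : realType) (n m l : nat).
Variables (f : 'rV[R]_n -> 'rV[R]_m -> 'rV[R]_n)
  (g : 'I_l -> 'rV[R]_n -> 'rV[R]_m -> R) (N : 'I_l -> 'I_n)
  (k : 'rV[R]_l -> 'rV[R]_n -> 'rV[R]_m).
Hypotheses (Sf : smooth (fun q : 'rV[R]_n * 'rV[R]_m => f q.1 q.2))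
  (Sg : forall p, smooth (fun q : 'rV[R]_n * 'rV[R]_m => g p q.1 q.2))
  (Sk : smooth (fun q : 'rV[R]_l * 'rV[R]_n => k q.1 q.2))
  (Ninj : injective N).
Variables (theta : 'rV[R]_l) (d : nat -> 'rV[R]_l) (tau : nat -> R) (x : R -> 'rV[R]_n).
Hypothesis tau_incr : forall j, (j < l)%N -> tau j < tau j.+1.
Hypothesis x_ode : forall j, (j < l)%N -> forall u, tau j < u < tau j.+1 ->
  derivable x u 1 /\ 'D_1 x u = Fz N f g k theta (theta + d j) (x u).
Hypothesis x_neq0 : forall j, (j < l)%N -> forall t, tau j <= t <= tau j.+1 -> x t != 0.
Hypothesis gd0 : forall i j, (i < l)%N -> (j <= i)%N ->
  forall t, tau j <= t <= tau j.+1 ->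
  gmul N g (x t) (k (theta + d j) (x t)) (d i.+1) = 0.

Lemma star_d_eq0 s p : (s < l)%N -> star N f g k theta (theta + d s) p ->
  forall i, (s < i <= l)%N -> d i 0 p = 0.
Proof.
move=> sl star_p i /andP[si il]; apply: contrapT => /eqP dip.
set h := fun y => g p y (k (theta + d s) y).
have h0 u : tau s <= u <= tau s.+1 -> h (x u) = 0.
  have il' : (i.-1 < l)%N by lia.
  have si' : (s <= i.-1)%N by lia.
  move=> uI; move: (gd0 il' si' uI); rewrite prednK; last by lia.
  move=> /(congr1 (fun M : 'rV[R]_n => M 0 (N p))); rewrite gmul_coord // mxE.
  by move/eqP; rewrite mulf_eq0 (negbTE dip) orbF => /eqP.
have dL j y : differentiable (lieN (Fz N f g k theta (theta + d s)) j h) y.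
  exact: smooth_differentiable y (smooth_lieN N Sf Sg Sk _ _ j (smooth_gk Sg Sk _ p)).
have hx0 v : tau s < v < tau s.+1 -> h (x v) = 0.
  by case/andP=> sv vs; apply: h0; rewrite (ltW sv) (ltW vs).
have [su us] := midf_lt (tau_incr sl).
have uI : tau s <= (tau s + tau s.+1) / 2 <= tau s.+1 by rewrite (ltW su) (ltW us).
have := x_neq0 sl uI.
rewrite (star_p _ (h0 _ uI)) ?eqxx // => j _.
by apply: (lieN_comp_eq0 dL (x_ode sl) hx0); rewrite su us.
Qed.

Lemma cumI_d_eq0 s : (s <= l)%N -> forall p,
  cumI N f g k theta (fun j => theta + d j) s p ->
  forall i, (s <= i <= l)%N -> d i 0 p = 0.
Proof.
elim: s => [//|s IH] sl p /= [Jp|star_p] i /andP[si il].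
  by apply: (IH (ltnW sl) p Jp); rewrite il andbT ltnW.
have zE : zrepl (cumI N f g k theta (fun j => theta + d j) s) (theta + d s) theta
    = theta + d s.
  apply: zrepl_id => q Jq.
  by rewrite !mxE (IH (ltnW sl) q Jq s) ?addr0 // leqnn ltnW.
by rewrite zE in star_p; apply: (star_d_eq0 sl star_p); rewrite si il.
Qed.

End Algorithm.

Theorem theorem4p1 (R : realType) (n m l : nat)
  (f : 'rV[R]_n -> 'rV[R]_m -> 'rV[R]_n)
  (g : 'I_l -> 'rV[R]_n -> 'rV[R]_m -> R)
  (N : 'I_l -> 'I_n)
  (k : 'rV[R]_l -> 'rV[R]_n -> 'rV[R]_m) :
  (0 < n)%N -> (0 < m)%N -> (0 < l)%N ->
  smooth (fun p : 'rV[R]_n * 'rV[R]_m => f p.1 p.2) ->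
  f 0 0 = 0 ->
  (forall i, smooth (fun p : 'rV[R]_n * 'rV[R]_m => g i p.1 p.2)) ->
  (forall i, g i 0 0 = 0) ->
  injective N ->
  smooth (fun p : 'rV[R]_l * 'rV[R]_n => k p.1 p.2) ->
  (forall vt, k vt 0 = 0) ->
  (forall (theta : 'rV[R]_l) (thh : nat -> 'rV[R]_l),
      cumI N f g k theta thh l = setT) ->
  forall (tau : nat -> R) (theta : 'rV[R]_l) (d : nat -> 'rV[R]_l)
         (x : R -> 'rV[R]_n),
  tau 0%N = 0 ->
  (forall i, (i < l)%N -> tau i < tau i.+1) ->
  (forall i, (i <= l)%N -> d i != 0) ->
  {within `[0, tau l], continuous x} ->
  (forall t, 0 <= t < tau l -> right_derivable x t) ->
  (forall t, 0 < t < tau l -> (forall i, (i <= l)%N -> t != tau i) ->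
     derivable x t 1 /\ {for t, continuous (fun s => 'D_1 x s)}) ->
  (forall i, (i < l)%N -> forall t, tau i <= t < tau i.+1 ->
     right_deriv x t (f (x t) (k (theta + d i) (x t))
                      + gmul N g (x t) (k (theta + d i) (x t)) theta)) ->
  (forall i j, (i < l)%N -> (j <= i)%N -> forall t, tau j <= t <= tau j.+1 ->
     gmul N g (x t) (k (theta + d j) (x t)) (d i.+1) = 0) ->
  forall t, 0 <= t <= tau l -> x t = 0.
Proof.
move=> _ _ _ Sf f0 Sg g0 Ninj Sk k0 cumI_all tau theta d x tau0 tau_incr d_neq0
  x_cont _ x_C1 x_rderiv gd0 t tI.
have x_ode j : (j < l)%N -> forall u, tau j < u < tau j.+1 ->
    derivable x u 1 /\ 'D_1 x u = Fz N f g k theta (theta + d j) (x u).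
  move=> jl u /andP[ju uj].
  have uI : 0 < u < tau l.
    rewrite -tau0; apply/andP; split.
      exact: le_lt_trans (tau_le tau_incr (leq0n j) (ltnW jl)) ju.
    exact: lt_le_trans uj (tau_le tau_incr jl (leqnn l)).
  have [dxu _] := x_C1 u uI (tau_neq tau_incr jl (introT andP (conj ju uj))).
  by split=> //; apply: derive_right_deriv dxu (x_rderiv j jl u _); rewrite ltW.
apply: contrapT => xt0.
have x_neq0 j : (j < l)%N -> forall s, tau j <= s <= tau j.+1 -> x s != 0.
  move=> jl s sI; apply/eqP => xs0; apply: xt0.
  apply: (piecewise_zero (F := fun j => Fz N f g k theta (theta + d j))
    tau_incr _ x_ode _ jl sI xs0).
  all: try by rewrite tau0.
  move=> i _; have dF := differentiable_Fz N Sf Sg Sk theta (theta + d i) 0.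
  exact: linear_bound_near0 dF (Fz_at0 N theta (theta + d i) f0 g0 k0).
have dl0 : d l = 0.
  apply/rowP => p; rewrite mxE.
  apply: (cumI_d_eq0 Sf Sg Sk Ninj tau_incr x_ode x_neq0 gd0 (leqnn l)).
    by rewrite cumI_all.
  by rewrite leqnn.
by have := d_neq0 l (leqnn l); rewrite dl0 eqxx.
Qed.
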